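(* Let $A_*,R_*,\gamma>0$, let $r_k=R_*k^\gamma$, let $a_{1,1}=A_*$ and $a_{k,\ell}=0$ for $(k,\ell)\neq(1,1)$, and let $s_k\ge0$ satisfy: for every $\mu\ge0$, $\sum_k k^\mu s_k<\infty$, with $\mathfrak s_1:=\sum_k ks_k$. Consider the system $\frac{d}{dt}c_1=-A_*c_1^2+s_1-r_1c_1$, $\frac{d}{dt}c_2=\frac{A_*}{2}c_1^2+s_2-r_2c_2$, $\frac{d}{dt}c_k=s_k-r_kc_k$ $(k\ge3)$. Then: (1) Its unique nonnegative equilibrium is $$Q_1=\tfrac12\sqrt{\tfrac{r_1^2}{A_*^2}+\tfrac{4s_1}{A_*}}-\tfrac{r_1}{2A_*},\qquad Q_2=\tfrac{A_*}{2r_2}Q_1^2+\tfrac{s_2}{r_2},\qquad Q_k=\tfrac{s_k}{r_k}\ (k\ge3).$$ (2) For every nonnegative initial datum $c^{\mathrm{in}}$ with $\sum_k kc^{\mathrm{in}}_k<\infty$ and every $\mu\ge1$, the solution satisfies $\sum_{k\ge1}k^\mu|c_k(t)-Q_k|\le Ke^{-\kappa t}$ for all $t\ge1$, with $\kappa=\min\{\frac{A_*}{2\alpha},\frac{r_2}{2},\frac{3^\gamma}{2}R_*\}$, where $\alpha=(r_1^2/A_*^2+4s_1/A_* )^{-1/2}$, and $K$ a constant depending on $c^{\mathrm{in}}$, $\mu$ and the coefficients. (3) If moreover $A_*s_1\ge4R_*^2$, then for every $\mu\ge1$, every $\beta\in[0,1]$ and every nonnegative sequence $c$ (for which the sum converges),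 $2A_*(C_\mu+2)\sum_{\ell\ge1}\ell^{\mu+\beta}(c_\ell+Q_\ell)-R_*\ge(3(C_\mu+2)-1)R_*>0$, where $C_\mu=2^{\max\{\mu-2,0\}}\max\{\mu,\mu(\mu-1)\}$.
   Context: $\mathbb N=\{1,2,\dots\}$. Solutions of the system are understood as nonnegative classical solutions on $[0,\infty)$ with $c_k(0)=c_k^{\mathrm{in}}$. *)

From Stdlib Require Import Reals Lra.
Open Scope R_scope.

(* k^x for real x, k : nat (k >= 1 where used) *)
Definition npow (k : nat) (x : R) : R := Rpower (INR k) x.

(* psum f N = sum_{k=1}^{N} f k *)
Fixpoint psum (f : nat -> R) (N : nat) : R :=
  match N with
  | O => 0
  | S n => psum f n + f (S n)
  end.

Definition series_to (f : nat -> R) (l : R) : Prop := Un_cv (psum f) l.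

Definition rk (Rs gamma : R) (k : nat) : R := Rs * npow k gamma.

Definition rhs (A Rs gamma : R) (s : nat -> R) (c : nat -> R) (k : nat) : R :=
  match k with
  | 1%nat => - A * c 1%nat ^ 2 + s 1%nat - rk Rs gamma 1 * c 1%nat
  | 2%nat => A / 2 * c 1%nat ^ 2 + s 2%nat - rk Rs gamma 2 * c 2%nat
  | _ => s k - rk Rs gamma k * c k
  end.

Definition Q1 (A Rs gamma : R) (s : nat -> R) : R :=
  / 2 * sqrt (rk Rs gamma 1 ^ 2 / A ^ 2 + 4 * s 1%nat / A) - rk Rs gamma 1 / (2 * A).

Definition Q (A Rs gamma : R) (s : nat -> R) (k : nat) : R :=
  match k with
  | 1%nat => Q1 A Rs gamma s
  | 2%nat => A / (2 * rk Rs gamma 2) * Q1 A Rs gamma s ^ 2 + s 2%nat / rk Rs gamma 2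
  | _ => s k / rk Rs gamma k
  end.

Definition alpha (A Rs gamma : R) (s : nat -> R) : R :=
  / sqrt (rk Rs gamma 1 ^ 2 / A ^ 2 + 4 * s 1%nat / A).

Definition kappa (A Rs gamma : R) (s : nat -> R) : R :=
  Rmin (A / (2 * alpha A Rs gamma s))
       (Rmin (rk Rs gamma 2 / 2) (Rpower 3 gamma / 2 * Rs)).

Definition Cmu (mu : R) : R :=
  Rpower 2 (Rmax (mu - 2) 0) * Rmax mu (mu * (mu - 1)).

Definition is_solution (A Rs gamma : R) (s cin : nat -> R) (c : nat -> R -> R) : Prop :=
  (forall k, (1 <= k)%nat -> c k 0 = cin k) /\
  (forall k t, (1 <= k)%nat -> 0 <= t -> 0 <= c k t) /\
  (forall k t, (1 <= k)%nat -> 0 < t ->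
      derivable_pt_lim (c k) t (rhs A Rs gamma s (fun j => c j t) k)) /\
  (forall k eps, (1 <= k)%nat -> 0 < eps ->
      exists delta, 0 < delta /\
        forall t, 0 <= t < delta -> Rabs (c k t - c k 0) < eps).

From Stdlib Require Import Reals Lra Psatz.
Open Scope R_scope.

(* The system is triangular.  The error [c_1 - Q_1] solves a linear equation with
   damping [A (c_1 + Q_1) + R_*] >= [A Q_1 + R_*] >= kappa, so it decays like
   e^{-kappa t}.  The equation for [c_2] is linear with rate [r_2 > kappa] and is
   forced by [A/2 (c_1^2 - Q_1^2)] = O(e^{-kappa t}), so Duhamel's formula gives
   the same decay.  For [k >= 3], [c_k - Q_k] is the explicit exponential
   [(c_k^in - Q_k) e^{-r_k t}]; for [t >= 1] half of the rate [r_k >= 3^gamma R_*]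
   pays for kappa and the other half absorbs the weight, [k^mu e^{-r_k/2} <= B k],
   so the tail of the mu-th moment is controlled by the first moment of [c^in] and
   the mu-th moment of [s].  Part (3) only uses the first term of the series,
   together with [2 A Q_1 >= 3 R_*] when [A s_1 >= 4 R_*^2]. *)

Lemma exp_le_compat x y : x <= y -> exp x <= exp y.
Proof. intros [Hlt | ->]; [left; apply exp_increasing; exact Hlt | right; reflexivity]. Qed.

Lemma npow_1 x : npow 1 x = 1.
Proof. unfold npow, Rpower; simpl. rewrite ln_1, Rmult_0_r, exp_0; reflexivity. Qed.

Lemma npow_pos k x : 0 < npow k x.
Proof. apply exp_pos. Qed.

Lemma npow_ge_1 k x : (1 <= k)%nat -> 0 <= x -> 1 <= npow k x.
Proof.
  intros Hk Hx. assert (H1k : 1 <= INR k) by (apply (le_INR 1); exact Hk).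
  unfold npow. rewrite <- (Rpower_O (INR k)) by lra. apply Rle_Rpower; assumption.
Qed.

Lemma rk_1 Rs gamma : rk Rs gamma 1 = Rs.
Proof. unfold rk. rewrite npow_1. ring. Qed.

Lemma rk_pos Rs gamma k : 0 < Rs -> 0 < rk Rs gamma k.
Proof. intros hR. apply Rmult_lt_0_compat; [exact hR | apply npow_pos]. Qed.

Lemma rk_ge_Rs Rs gamma k : 0 < Rs -> 0 <= gamma -> (1 <= k)%nat -> Rs <= rk Rs gamma k.
Proof. intros hR hg hk. unfold rk. pose proof (npow_ge_1 k gamma hk hg). nra. Qed.

Lemma rk_ge_3 Rs gamma k : 0 < Rs -> 0 <= gamma -> (3 <= k)%nat ->
  Rpower 3 gamma * Rs <= rk Rs gamma k.
Proof.
  intros hR hg hk. unfold rk, npow. rewrite Rmult_comm. apply Rmult_le_compat_l; [lra|].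
  apply Rle_Rpower_l; [exact hg|]. split; [lra|].
  replace 3 with (INR 3) by (simpl; ring). apply le_INR. exact hk.
Qed.

Definition right_cont0 (f : R -> R) : Prop :=
  forall eps, 0 < eps -> exists delta, 0 < delta /\
    forall t, 0 <= t < delta -> Rabs (f t - f 0) < eps.

(* Clamping to [0, oo) turns right continuity at 0 into plain continuity,
   so the closure properties below are inherited from [continuity_pt]. *)
Lemma right_cont0_clamp f :
  right_cont0 f <-> continuity_pt (fun t => f (Rmax t 0)) 0.
Proof.
  assert (Hmax0 : Rmax 0 0 = 0) by (apply Rmax_left; lra).
  split.
  - intros Hf eps Heps. destruct (Hf eps Heps) as [d [Hd Hfd]].
    exists d. split; [exact Hd|]. intros t [_ Ht]. simpl in *. unfold R_dist in *.
    rewrite Hmax0. apply Hfd. split; [apply Rmax_r|].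
    apply Rabs_def2 in Ht. unfold Rmax. destruct Rle_dec; lra.
  - intros Hf eps Heps. destruct (Hf eps Heps) as [d [Hd Hfd]].
    exists d. split; [exact Hd|]. intros t [Ht0 Htd].
    destruct (Req_dec t 0) as [-> | Hne]; [rewrite Rminus_diag, Rabs_R0; exact Heps|].
    specialize (Hfd t). simpl in Hfd. unfold R_dist in Hfd.
    rewrite Hmax0, Rmax_left in Hfd by lra. apply Hfd.
    split; [split; [exact I | auto] | apply Rabs_def1; lra].
Qed.

Lemma right_cont0_of_continuity f : continuity_pt f 0 -> right_cont0 f.
Proof.
  intros Hf eps Heps. destruct (Hf eps Heps) as [d [Hd Hfd]].
  exists d. split; [exact Hd|]. intros t [Ht0 Htd].
  destruct (Req_dec t 0) as [-> | Hne]; [rewrite Rminus_diag, Rabs_R0; exact Heps|].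
  apply (Hfd t). split; [split; [exact I | auto] | simpl; unfold R_dist; apply Rabs_def1; lra].
Qed.

Lemma right_cont0_const a : right_cont0 (fun _ => a).
Proof. apply right_cont0_of_continuity, continuity_pt_const. intros x y; reflexivity. Qed.

Lemma right_cont0_opp f : right_cont0 f -> right_cont0 (fun t => - f t).
Proof. rewrite !right_cont0_clamp. apply continuity_pt_opp. Qed.

Lemma right_cont0_minus f g :
  right_cont0 f -> right_cont0 g -> right_cont0 (fun t => f t - g t).
Proof. rewrite !right_cont0_clamp. apply continuity_pt_minus. Qed.

Lemma right_cont0_mult f g :
  right_cont0 f -> right_cont0 g -> right_cont0 (fun t => f t * g t).
Proof. rewrite !right_cont0_clamp. apply continuity_pt_mult. Qed.

Lemma derivable_pt_lim_exp_scal a x :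
  derivable_pt_lim (fun t => exp (a * t)) x (a * exp (a * x)).
Proof.
  replace (a * exp (a * x)) with (exp (a * x) * a) by ring.
  apply (derivable_pt_lim_comp (fun t => a * t) exp).
  - pose proof (derivable_pt_lim_scal id a x 1 (derivable_pt_lim_id x)) as H.
    rewrite Rmult_1_r in H. exact H.
  - apply derivable_pt_lim_exp.
Qed.

Lemma right_cont0_exp_scal a : right_cont0 (fun t => exp (a * t)).
Proof.
  apply right_cont0_of_continuity, derivable_continuous_pt.
  exists (a * exp (a * 0)). apply derivable_pt_lim_exp_scal.
Qed.

Lemma nonincreasing_from_0 f f' : right_cont0 f ->
  (forall t, 0 < t -> derivable_pt_lim f t (f' t)) ->
  (forall t, 0 < t -> f' t <= 0) ->
  forall t, 0 <= t -> f t <= f 0.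
Proof.
  intros Hc Hd Hneg t Ht. destruct (Rle_or_lt (f t) (f 0)) as [Hle | Hgt]; [exact Hle|].
  exfalso. destruct (Req_dec t 0) as [-> | Hne]; [lra|].
  (* Near 0 the function stays below f t, while on [e, t] it cannot increase. *)
  destruct (Hc (f t - f 0)) as [d [Hd0 Hfd]]; [lra|].
  set (e := Rmin (d / 2) (t / 2)).
  assert (He : 0 < e /\ e < d /\ e < t).
  { unfold e. repeat split; [apply Rmin_glb_lt; lra | |].
    - apply Rle_lt_trans with (d / 2); [apply Rmin_l | lra].
    - apply Rle_lt_trans with (t / 2); [apply Rmin_r | lra]. }
  specialize (Hfd e ltac:(lra)). apply Rabs_def2 in Hfd.
  destruct (MVT_cor2 f f' e t ltac:(lra)) as [x [Hmvt Hx]].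
  { intros x Hx. apply Hd. lra. }
  specialize (Hneg x ltac:(lra)). nra.
Qed.

Lemma linear_ode_solution f r q : right_cont0 f ->
  (forall t, 0 < t -> derivable_pt_lim f t (- r * (f t - q))) ->
  forall t, 0 <= t -> f t - q = (f 0 - q) * exp (- r * t).
Proof.
  intros Hc Hd t Ht.
  set (g := fun t => (f t - q) * exp (r * t)).
  assert (Hgc : right_cont0 g).
  { apply right_cont0_mult; [apply right_cont0_minus, right_cont0_const |]; auto.
    apply right_cont0_exp_scal. }
  assert (Hgd : forall t, 0 < t -> derivable_pt_lim g t 0).
  { intros x Hx. replace 0 with ((- r * (f x - q) - 0) * exp (r * x) + (f x - q) * (r * exp (r * x)))
      by ring.
    apply (derivable_pt_lim_mult (fun t => f t - q) (fun t => exp (r * t))).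
    - apply (derivable_pt_lim_minus f (fun _ => q)); [apply Hd; exact Hx | apply derivable_pt_lim_const].
    - apply derivable_pt_lim_exp_scal. }
  assert (Hle : g t <= g 0) by (apply (nonincreasing_from_0 g (fun _ => 0)); auto; intros; lra).
  assert (Hge : - g t <= - g 0).
  { apply (nonincreasing_from_0 (fun t => - g t) (fun _ => 0)); auto; [apply right_cont0_opp; exact Hgc| |intros; lra].
    intros x Hx. replace 0 with (- 0) by ring. apply (derivable_pt_lim_opp g), Hgd, Hx. }
  assert (Hg : g t = g 0) by lra. unfold g in Hg.
  rewrite Rmult_0_r, exp_0, Rmult_1_r in Hg. rewrite <- Hg, Rmult_assoc, <- exp_plus.
  replace (r * t + - r * t) with 0 by ring. rewrite exp_0. ring.
Qed.

Lemma damped_decay d lam kap : right_cont0 d ->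
  (forall t, 0 < t -> derivable_pt_lim d t (- lam t * d t)) ->
  (forall t, 0 < t -> kap <= lam t) ->
  forall t, 0 <= t -> Rabs (d t) * exp (kap * t) <= Rabs (d 0).
Proof.
  intros Hc Hd Hlam t Ht.
  set (phi := fun t => d t * d t * exp (2 * kap * t)).
  assert (Hpc : right_cont0 phi) by
    (apply right_cont0_mult; [apply right_cont0_mult |apply right_cont0_exp_scal]; exact Hc).
  assert (Hpd : forall t, 0 < t -> derivable_pt_lim phi t
              (2 * (kap - lam t) * (d t * d t * exp (2 * kap * t)))).
  { intros x Hx.
    replace (2 * (kap - lam x) * (d x * d x * exp (2 * kap * x))) with
      ((- lam x * d x * d x + d x * (- lam x * d x)) * exp (2 * kap * x)
       + d x * d x * (2 * kap * exp (2 * kap * x))) by ring.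
    apply (derivable_pt_lim_mult (fun t => d t * d t) (fun t => exp (2 * kap * t))).
    - apply (derivable_pt_lim_mult d d); apply Hd; exact Hx.
    - apply derivable_pt_lim_exp_scal. }
  assert (Hphi : phi t <= phi 0).
  { apply (nonincreasing_from_0 phi _ Hpc Hpd); [|exact Ht].
    intros x Hx. cbv beta. pose proof (Hlam x Hx). pose proof (exp_pos (2 * kap * x)).
    assert (Hsq : 0 <= d x * d x) by (pose proof (Rle_0_sqr (d x)); unfold Rsqr in *; lra).
    assert (0 <= d x * d x * exp (2 * kap * x)) by (apply Rmult_le_pos; lra). nra. }
  unfold phi in Hphi. rewrite Rmult_0_r, exp_0, Rmult_1_r in Hphi.
  replace (2 * kap * t) with (kap * t + kap * t) in Hphi by ring. rewrite exp_plus in Hphi.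
  pose proof (exp_pos (kap * t)). pose proof (Rabs_pos (d t)). pose proof (Rabs_pos (d 0)).
  assert ((Rabs (d t) * exp (kap * t)) ^ 2 <= Rabs (d 0) ^ 2)
    by (rewrite Rpow_mult_distr, !pow2_abs; nra).
  nra.
Qed.

Lemma forced_decay_upper f g r kap M : right_cont0 f ->
  (forall t, 0 < t -> derivable_pt_lim f t (g t - r * f t)) ->
  kap < r -> 0 <= M ->
  (forall t, 0 < t -> g t * exp (kap * t) <= M) ->
  forall t, 0 <= t -> f t * exp (kap * t) <= Rabs (f 0) + M / (r - kap).
Proof.
  intros Hc Hd Hkr HM Hg t Ht.
  set (m := M / (r - kap)).
  assert (Hm : 0 <= m) by (apply Rmult_le_pos; [exact HM | left; apply Rinv_0_lt_compat; lra]).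
  (* Duhamel: f e^{rt} grows no faster than the primitive m e^{(r-kap)t} of M e^{(r-kap)t}. *)
  set (psi := fun t => f t * exp (r * t) - m * exp ((r - kap) * t)).
  assert (Hpc : right_cont0 psi).
  { apply right_cont0_minus; apply right_cont0_mult;
      try apply right_cont0_exp_scal; [exact Hc | apply right_cont0_const]. }
  assert (Hpd : forall t, 0 < t -> derivable_pt_lim psi t
                  (exp ((r - kap) * t) * (g t * exp (kap * t) - M))).
  { intros x Hx.
    replace (exp ((r - kap) * x) * (g x * exp (kap * x) - M)) with
      (((g x - r * f x) * exp (r * x) + f x * (r * exp (r * x)))
       - (0 * exp ((r - kap) * x) + m * ((r - kap) * exp ((r - kap) * x)))).
    2:{ unfold m. replace (r * x) with ((r - kap) * x + kap * x) by ring.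
        rewrite exp_plus. field. lra. }
    apply (derivable_pt_lim_minus (fun t => f t * exp (r * t)) (fun t => m * exp ((r - kap) * t))).
    - apply (derivable_pt_lim_mult f (fun t => exp (r * t))); [apply Hd, Hx | apply derivable_pt_lim_exp_scal].
    - apply (derivable_pt_lim_mult (fun _ => m) (fun t => exp ((r - kap) * t)));
        [apply derivable_pt_lim_const | apply derivable_pt_lim_exp_scal]. }
  assert (Hpsi : psi t <= psi 0).
  { apply (nonincreasing_from_0 psi _ Hpc Hpd); [|exact Ht].
    intros x Hx. cbv beta. pose proof (Hg x Hx). pose proof (exp_pos ((r - kap) * x)). nra. }
  unfold psi in Hpsi. rewrite !Rmult_0_r, exp_0, !Rmult_1_r in Hpsi.
  replace (r * t) with ((r - kap) * t + kap * t) in Hpsi by ring. rewrite exp_plus in Hpsi.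
  set (Z := exp ((r - kap) * t)) in *. set (X := exp (kap * t)) in *.
  assert (HZ : 1 <= Z) by (unfold Z; rewrite <- exp_0; apply exp_le_compat; nra).
  pose proof (Rle_abs (f 0)). pose proof (Rabs_pos (f 0)).
  assert (Z * (f t * X) <= Z * (Rabs (f 0) + m)) by nra. nra.
Qed.

Lemma forced_decay f g r kap M : right_cont0 f ->
  (forall t, 0 < t -> derivable_pt_lim f t (g t - r * f t)) ->
  kap < r -> 0 <= M ->
  (forall t, 0 < t -> Rabs (g t) * exp (kap * t) <= M) ->
  forall t, 0 <= t -> Rabs (f t) * exp (kap * t) <= Rabs (f 0) + M / (r - kap).
Proof.
  intros Hc Hd Hkr HM Hg t Ht.
  assert (Hup : f t * exp (kap * t) <= Rabs (f 0) + M / (r - kap)).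
  { apply (forced_decay_upper f g); auto.
    intros x Hx. eapply Rle_trans; [|apply Hg, Hx].
    apply Rmult_le_compat_r; [left; apply exp_pos | apply Rle_abs]. }
  assert (Hlow : - f t * exp (kap * t) <= Rabs (- f 0) + M / (r - kap)).
  { apply (forced_decay_upper (fun t => - f t) (fun t => - g t)); auto.
    - apply right_cont0_opp, Hc.
    - intros x Hx. replace (- g x - r * - f x) with (- (g x - r * f x)) by ring.
      apply (derivable_pt_lim_opp f), Hd, Hx.
    - intros x Hx. eapply Rle_trans; [|apply Hg, Hx].
      apply Rmult_le_compat_r; [left; apply exp_pos|].
      rewrite <- Rabs_Ropp. apply Rle_abs. }
  rewrite Rabs_Ropp in Hlow. unfold Rabs at 1. destruct Rcase_abs; lra.
Qed.

Section Equilibrium.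
Variables (A Rs gamma : R) (s : nat -> R).
Hypotheses (hA : 0 < A) (hR : 0 < Rs) (hg : 0 < gamma)
  (hs_nonneg : forall k, (1 <= k)%nat -> 0 <= s k).

Let disc := rk Rs gamma 1 ^ 2 / A ^ 2 + 4 * s 1%nat / A.
(* [w] is the square root of the discriminant [Rs^2 + 4 A s_1] of [A x^2 + Rs x = s_1]. *)
Let w := A * sqrt disc.

Lemma s1_nonneg : 0 <= s 1%nat.
Proof. apply hs_nonneg; lia. Qed.

Lemma disc_pos : 0 < disc.
Proof.
  unfold disc. rewrite rk_1. pose proof s1_nonneg.
  assert (0 < Rs ^ 2 / A ^ 2) by (apply Rdiv_lt_0_compat; apply pow_lt; lra).
  assert (0 <= 4 * s 1%nat / A) by (apply Rmult_le_pos; [lra | left; apply Rinv_0_lt_compat; lra]).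
  lra.
Qed.

Lemma w_pos : 0 < w.
Proof. apply Rmult_lt_0_compat; [exact hA | apply sqrt_lt_R0, disc_pos]. Qed.

Lemma w_sq : w * w = Rs ^ 2 + 4 * A * s 1%nat.
Proof.
  unfold w. replace (A * sqrt disc * (A * sqrt disc)) with (A * A * (sqrt disc * sqrt disc)) by ring.
  rewrite sqrt_sqrt by (left; apply disc_pos). unfold disc. rewrite rk_1. field. lra.
Qed.

Lemma A_Q1 : 2 * A * Q1 A Rs gamma s = w - Rs.
Proof. unfold Q1, w. fold disc. rewrite rk_1. field. lra. Qed.

Lemma Rs_le_w : Rs <= w.
Proof. pose proof w_sq. pose proof w_pos. pose proof s1_nonneg. nra. Qed.

Lemma Q1_nonneg : 0 <= Q1 A Rs gamma s.
Proof.
  pose proof A_Q1. pose proof Rs_le_w.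
  apply (Rmult_le_reg_l (2 * A)); lra.
Qed.

Lemma Q1_root : A * Q1 A Rs gamma s ^ 2 + Rs * Q1 A Rs gamma s = s 1%nat.
Proof.
  pose proof A_Q1. pose proof w_sq.
  apply (Rmult_eq_reg_l (4 * A)); [|lra]. nra.
Qed.

Lemma Q1_lower_bound : A * s 1%nat >= 4 * Rs ^ 2 -> 3 * Rs <= 2 * A * Q1 A Rs gamma s.
Proof. intros Hs. rewrite A_Q1. pose proof w_sq. pose proof w_pos. nra. Qed.

Lemma kappa_first_term : A / (2 * alpha A Rs gamma s) = w / 2.
Proof. unfold alpha, w. fold disc. pose proof (sqrt_lt_R0 _ disc_pos). field. lra. Qed.

Lemma kappa_pos : 0 < kappa A Rs gamma s.
Proof.
  unfold kappa. rewrite kappa_first_term. pose proof w_pos.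
  pose proof (rk_pos Rs gamma 2 hR). assert (0 < Rpower 3 gamma) by apply exp_pos.
  repeat apply Rmin_glb_lt; nra.
Qed.

(* The Riccati equation for c_1 linearised at Q_1 decays at rate [A Q_1 + Rs] = [(w + Rs)/2]. *)
Lemma kappa_le_rate1 : kappa A Rs gamma s <= A * Q1 A Rs gamma s + Rs.
Proof.
  unfold kappa. rewrite kappa_first_term. pose proof A_Q1.
  eapply Rle_trans; [apply Rmin_l | lra].
Qed.

Lemma kappa_lt_r2 : kappa A Rs gamma s < rk Rs gamma 2.
Proof.
  pose proof (rk_pos Rs gamma 2 hR).
  unfold kappa. eapply Rle_lt_trans; [apply Rmin_r|]. eapply Rle_lt_trans; [apply Rmin_l | lra].
Qed.

Lemma kappa_le_half_rk k : (3 <= k)%nat -> kappa A Rs gamma s <= rk Rs gamma k / 2.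
Proof.
  intros hk. pose proof (rk_ge_3 Rs gamma k hR ltac:(lra) hk).
  unfold kappa. eapply Rle_trans; [apply Rmin_r|]. eapply Rle_trans; [apply Rmin_r | lra].
Qed.

Lemma Q_nonneg k : (1 <= k)%nat -> 0 <= Q A Rs gamma s k.
Proof.
  intros hk. pose proof (rk_pos Rs gamma k hR) as Hr.
  pose proof (hs_nonneg k hk) as Hs. pose proof Q1_nonneg.
  destruct k as [|[|[|k]]]; try lia; simpl; unfold Rdiv.
  - exact Q1_nonneg.
  - apply Rplus_le_le_0_compat; repeat apply Rmult_le_pos; try lra;
      left; apply Rinv_0_lt_compat; lra.
  - apply Rmult_le_pos; [exact Hs | left; apply Rinv_0_lt_compat; exact Hr].
Qed.

Lemma rhs_Q k : (1 <= k)%nat -> rhs A Rs gamma s (Q A Rs gamma s) k = 0.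
Proof.
  intros hk. pose proof (rk_pos Rs gamma k hR).
  destruct k as [|[|[|k]]]; try lia; simpl.
  - rewrite rk_1. pose proof Q1_root. lra.
  - field. lra.
  - field. lra.
Qed.

Lemma equilibrium_unique q :
  (forall k, (1 <= k)%nat -> 0 <= q k) ->
  (forall k, (1 <= k)%nat -> rhs A Rs gamma s q k = 0) ->
  forall k, (1 <= k)%nat -> q k = Q A Rs gamma s k.
Proof.
  intros Hq Hrhs.
  assert (E1 : q 1%nat = Q1 A Rs gamma s).
  { specialize (Hrhs 1%nat ltac:(lia)). specialize (Hq 1%nat ltac:(lia)).
    simpl in Hrhs. rewrite rk_1 in Hrhs. pose proof Q1_root. pose proof Q1_nonneg.
    assert (Hfac : (q 1%nat - Q1 A Rs gamma s) * (A * (q 1%nat + Q1 A Rs gamma s) + Rs) = 0).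
    { replace (_ * _) with ((A * q 1%nat ^ 2 + Rs * q 1%nat)
        - (A * Q1 A Rs gamma s ^ 2 + Rs * Q1 A Rs gamma s)) by ring. lra. }
    apply Rmult_integral in Hfac as [Hfac | Hfac]; nra. }
  intros k hk. specialize (Hrhs k hk). pose proof (rk_pos Rs gamma k hR).
  destruct k as [|[|[|k]]]; try lia; simpl in Hrhs |- *.
  - exact E1.
  - rewrite E1 in Hrhs. field_simplify_eq; lra.
  - field_simplify_eq; lra.
Qed.

End Equilibrium.

Section Solution.
Variables (A Rs gamma : R) (s cin : nat -> R) (c : nat -> R -> R).
Hypotheses (hA : 0 < A) (hR : 0 < Rs) (hg : 0 < gamma)
  (hs_nonneg : forall k, (1 <= k)%nat -> 0 <= s k)
  (hsol : is_solution A Rs gamma s cin c).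

Let q := Q A Rs gamma s.
Let kap := kappa A Rs gamma s.

Lemma sol_init k : (1 <= k)%nat -> c k 0 = cin k.
Proof. apply hsol. Qed.

Lemma sol_nonneg k t : (1 <= k)%nat -> 0 <= t -> 0 <= c k t.
Proof. apply hsol. Qed.

Lemma cin_nonneg k : (1 <= k)%nat -> 0 <= cin k.
Proof. intros hk. rewrite <- sol_init by exact hk. apply sol_nonneg; lra || exact hk. Qed.

Lemma sol_deriv k t : (1 <= k)%nat -> 0 < t ->
  derivable_pt_lim (c k) t (rhs A Rs gamma s (fun j => c j t) k).
Proof. apply hsol. Qed.

Lemma sol_right_cont k : (1 <= k)%nat -> right_cont0 (c k).
Proof. intros hk eps Heps. apply (proj2 (proj2 (proj2 hsol))); assumption. Qed.

Lemma sol_err_right_cont k : (1 <= k)%nat -> right_cont0 (fun t => c k t - q k).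
Proof. intros hk. apply right_cont0_minus; [apply sol_right_cont, hk | apply right_cont0_const]. Qed.

Lemma sol_err_deriv k t l : (1 <= k)%nat -> 0 < t ->
  rhs A Rs gamma s (fun j => c j t) k = l ->
  derivable_pt_lim (fun t => c k t - q k) t l.
Proof.
  intros hk ht <-. rewrite <- (Rminus_0_r (rhs _ _ _ _ _ k)).
  apply (derivable_pt_lim_minus (c k) (fun _ => q k));
    [apply sol_deriv; assumption | apply derivable_pt_lim_const].
Qed.

Lemma sol_tail k t : (3 <= k)%nat -> 0 <= t ->
  c k t - q k = (cin k - q k) * exp (- rk Rs gamma k * t).
Proof.
  intros hk ht. rewrite <- sol_init by lia.
  apply (linear_ode_solution (c k)); [apply sol_right_cont; lia | | exact ht].
  intros x hx. pose proof (rk_pos Rs gamma k hR).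
  replace (- rk Rs gamma k * (c k x - q k)) with (rhs A Rs gamma s (fun j => c j x) k).
  - apply sol_deriv; [lia | exact hx].
  - unfold q. destruct k as [|[|[|k]]]; try lia. simpl. field. lra.
Qed.

Lemma sol_first_decay t : 0 <= t ->
  Rabs (c 1%nat t - q 1%nat) * exp (kap * t) <= Rabs (cin 1%nat - q 1%nat).
Proof.
  intros ht. rewrite <- sol_init by lia.
  apply (damped_decay (fun t => c 1%nat t - q 1%nat) (fun t => A * (c 1%nat t + q 1%nat) + Rs));
    [apply sol_err_right_cont; lia | | | exact ht].
  - intros x hx. apply sol_err_deriv; [lia | exact hx |].
    pose proof (Q1_root A Rs gamma s hA hR hs_nonneg). simpl. rewrite rk_1.
    unfold q, Q. nra.
  - intros x hx. pose proof (sol_nonneg 1 x ltac:(lia) ltac:(lra)).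
    pose proof (kappa_le_rate1 A Rs gamma s hA hR hs_nonneg). unfold kap, q, Q. nra.
Qed.

Let D1 := Rabs (cin 1%nat - q 1%nat).
Let M := A / 2 * D1 * (D1 + 2 * q 1%nat).

Lemma forcing_decay t : 0 < t ->
  Rabs (A / 2 * (c 1%nat t ^ 2 - q 1%nat ^ 2)) * exp (kap * t) <= M.
Proof.
  intros ht. pose proof (sol_first_decay t ltac:(lra)) as Hd. fold D1 in Hd.
  assert (HQ : 0 <= q 1%nat) by exact (Q1_nonneg A Rs gamma s hA hR hs_nonneg).
  assert (HX : 1 <= exp (kap * t)).
  { rewrite <- exp_0. apply exp_le_compat. pose proof (kappa_pos A Rs gamma s hA hR hs_nonneg). unfold kap. nra. }
  set (d := c 1%nat t - q 1%nat) in *. set (X := exp (kap * t)) in *.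
  replace (c 1%nat t ^ 2 - q 1%nat ^ 2) with (d * (d + 2 * q 1%nat)) by (unfold d; ring).
  rewrite !Rabs_mult, (Rabs_right (A / 2)) by lra.
  assert (Hd2 : Rabs (d + 2 * q 1%nat) <= D1 + 2 * q 1%nat).
  { eapply Rle_trans; [apply Rabs_triang|]. rewrite (Rabs_right (2 * q 1%nat)) by lra.
    pose proof (Rabs_pos d). nra. }
  pose proof (Rabs_pos d). pose proof (Rabs_pos (d + 2 * q 1%nat)).
  replace (A / 2 * (Rabs d * Rabs (d + 2 * q 1%nat)) * X)
    with (A / 2 * ((Rabs d * X) * Rabs (d + 2 * q 1%nat))) by ring.
  replace M with (A / 2 * (D1 * (D1 + 2 * q 1%nat))) by (unfold M; ring).
  apply Rmult_le_compat_l; [lra|].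
  apply Rmult_le_compat; nra.
Qed.

Lemma sol_second_decay t : 0 <= t ->
  Rabs (c 2%nat t - q 2%nat) * exp (kap * t)
  <= Rabs (cin 2%nat - q 2%nat) + M / (rk Rs gamma 2 - kap).
Proof.
  intros ht. rewrite <- sol_init by lia.
  apply (forced_decay (fun t => c 2%nat t - q 2%nat) (fun t => A / 2 * (c 1%nat t ^ 2 - q 1%nat ^ 2)));
    [apply sol_err_right_cont; lia | | apply kappa_lt_r2; assumption | | exact forcing_decay | exact ht].
  - intros x hx. apply sol_err_deriv; [lia | exact hx |].
    pose proof (rk_pos Rs gamma 2 hR). unfold q, Q. simpl. field. lra.
  - assert (HQ : 0 <= q 1%nat) by exact (Q1_nonneg A Rs gamma s hA hR hs_nonneg).
    pose proof (Rabs_pos (cin 1%nat - q 1%nat)).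
    unfold M, D1. apply Rmult_le_pos; [apply Rmult_le_pos|]; lra.
Qed.

Lemma tail_moment_decay mu B k t : (3 <= k)%nat -> 1 <= t ->
  npow k mu * exp (- rk Rs gamma k / 2) <= B * INR k ->
  npow k mu * Rabs (c k t - q k)
  <= exp (- kap * t) * (B * (INR k * cin k) + npow k mu * s k / Rs).
Proof.
  intros hk ht HB. rewrite sol_tail by (lia || lra).
  set (r := rk Rs gamma k) in *.
  assert (Hr : Rs <= r) by (apply rk_ge_Rs; lra || lia).
  assert (Hkap : kap <= r / 2) by (apply kappa_le_half_rk; assumption).
  assert (Hq : q k = s k / r) by (unfold q; destruct k as [|[|[|k]]]; [lia..| reflexivity]).
  assert (Hs : 0 <= s k) by (apply hs_nonneg; lia).
  assert (Hc : 0 <= cin k) by (apply cin_nonneg; lia).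
  assert (Hq0 : 0 <= q k) by (apply Q_nonneg; assumption || lia).
  assert (Hqs : q k <= s k / Rs).
  { rewrite Hq. apply Rmult_le_compat_l; [exact Hs|]. apply Rinv_le_contravar; lra. }
  assert (Hexp : exp (- r * t) <= exp (- kap * t) * exp (- r / 2)).
  { rewrite <- exp_plus. apply exp_le_compat. nra. }
  assert (He1 : exp (- r / 2) <= 1) by (rewrite <- exp_0; apply exp_le_compat; lra).
  pose proof (exp_pos (- r / 2)). pose proof (exp_pos (- kap * t)). pose proof (npow_pos k mu).
  rewrite Rabs_mult, (Rabs_right (exp _)) by (left; apply exp_pos).
  assert (Habs : Rabs (cin k - q k) <= cin k + q k) by (apply Rabs_le; lra).
  apply Rle_trans with (npow k mu * (cin k + q k) * (exp (- kap * t) * exp (- r / 2))).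
  { rewrite Rmult_assoc. apply Rmult_le_compat_l; [lra|].
    apply Rmult_le_compat; [apply Rabs_pos | left; apply exp_pos | exact Habs | exact Hexp]. }
  replace (npow k mu * (cin k + q k) * (exp (- kap * t) * exp (- r / 2))) with
    (exp (- kap * t) * (cin k * (npow k mu * exp (- r / 2)) + npow k mu * q k * exp (- r / 2)))
    by ring.
  apply Rmult_le_compat_l; [lra|]. apply Rplus_le_compat.
  - replace (B * (INR k * cin k)) with (cin k * (B * INR k)) by ring.
    apply Rmult_le_compat_l; lra.
  - apply Rle_trans with (npow k mu * q k).
    + assert (0 <= npow k mu * q k) by (apply Rmult_le_pos; lra). nra.
    + unfold Rdiv. rewrite Rmult_assoc. apply Rmult_le_compat_l; lra.
Qed.

End Solution.

Lemma psum_plus f g N : psum (fun k => f k + g k) N = psum f N + psum g N.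
Proof. induction N as [|N IH]; simpl; [ring | rewrite IH; ring]. Qed.

Lemma psum_scal a f N : psum (fun k => a * f k) N = a * psum f N.
Proof. induction N as [|N IH]; simpl; [ring | rewrite IH; ring]. Qed.

Lemma psum_le_series f l N :
  (forall k, (1 <= k)%nat -> 0 <= f k) -> series_to f l -> psum f N <= l.
Proof.
  intros Hf Hl. apply growing_ineq; [|exact Hl].
  intros n. simpl. pose proof (Hf (S n) ltac:(lia)). lra.
Qed.

Lemma series_of_bounded_psum f M :
  (forall k, (1 <= k)%nat -> 0 <= f k) -> (forall N, psum f N <= M) ->
  exists l, series_to f l /\ l <= M.
Proof.
  intros Hf HM. destruct (growing_cv (psum f)) as [l Hl].
  - intros n. simpl. pose proof (Hf (S n) ltac:(lia)). lra.
  - exists M. intros x [n ->]. apply HM.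
  - exists l. split; [exact Hl|].
    apply (Rle_cv_lim HM Hl). intros e He. exists 0%nat. intros n _.
    unfold Rdist. rewrite Rminus_diag, Rabs_R0. exact He.
Qed.

Lemma psum_le_head_tail f g N :
  (forall k, (1 <= k)%nat -> 0 <= f k) -> (forall k, (1 <= k)%nat -> 0 <= g k) ->
  (forall k, (3 <= k)%nat -> f k <= g k) ->
  psum f N <= f 1%nat + f 2%nat + psum g N.
Proof.
  intros Hf Hg Hfg. pose proof (Hf 1%nat ltac:(lia)). pose proof (Hf 2%nat ltac:(lia)).
  induction N as [|[|[|N]] IH]; simpl in *; try lra.
  - pose proof (Hg 1%nat ltac:(lia)). lra.
  - pose proof (Hg 1%nat ltac:(lia)). pose proof (Hg 2%nat ltac:(lia)). lra.
  - pose proof (Hfg (S (S (S N))) ltac:(lia)). lra.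
Qed.

Lemma sq_quarter_le_exp x : 0 <= x -> x ^ 2 / 4 <= exp x.
Proof.
  intros Hx. replace x with (x / 2 + x / 2) at 2 by field. rewrite exp_plus.
  pose proof (exp_ineq1_le (x / 2)). nra.
Qed.

Lemma npow_exp_rk_le_linear Rs gamma mu : 0 < Rs -> 0 < gamma ->
  exists B, 0 < B /\
    forall k, (1 <= k)%nat -> npow k mu * exp (- rk Rs gamma k / 2) <= B * INR k.
Proof.
  intros hR hg. set (b := Rs * gamma ^ 2 / 8).
  assert (hb : 0 < b) by (unfold b; pose proof (pow_lt gamma 2 hg); nra).
  (* With u = ln k the exponent of k^mu e^{-r_k/2} / k is (mu-1) u - Rs e^{gamma u} / 2,
     and e^{gamma u} >= (gamma u)^2 / 4 makes it a concave quadratic in u. *)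
  exists (exp ((mu - 1) ^ 2 / (4 * b))). split; [apply exp_pos|]. intros k hk.
  assert (Hk : 1 <= INR k) by (apply (le_INR 1); exact hk).
  set (u := ln (INR k)).
  assert (hu : 0 <= u).
  { unfold u. destruct (Req_dec (INR k) 1) as [E | E]; [rewrite E, ln_1; lra|].
    rewrite <- ln_1. left. apply ln_increasing; lra. }
  assert (Ek : INR k = exp u) by (unfold u; rewrite exp_ln; lra).
  unfold rk, npow, Rpower. fold u. rewrite Ek, <- !exp_plus. apply exp_le_compat.
  pose proof (sq_quarter_le_exp (gamma * u) ltac:(nra)).
  assert (Hsq : (mu - 1) ^ 2 / (4 * b) - ((mu - 1) * u - b * u ^ 2)
                = (mu - 1 - 2 * b * u) ^ 2 / (4 * b)) by (field; lra).
  assert (0 <= (mu - 1 - 2 * b * u) ^ 2 / (4 * b))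
    by (apply Rmult_le_pos; [apply pow2_ge_0 | left; apply Rinv_0_lt_compat; lra]).
  unfold b in *. nra.
Qed.

Lemma Rle_exp_neg_of_mul_exp a b x : a * exp x <= b -> a <= exp (- x) * b.
Proof.
  intros H. pose proof (exp_pos (- x)).
  replace a with (exp (- x) * (a * exp x)) by (rewrite <- Rmult_assoc, (Rmult_comm _ a),
    Rmult_assoc, <- exp_plus, Rplus_opp_l, exp_0; ring).
  apply Rmult_le_compat_l; lra.
Qed.

Lemma moment_convergence A Rs gamma s
  (hA : 0 < A) (hR : 0 < Rs) (hg : 0 < gamma)
  (hs_nonneg : forall k, (1 <= k)%nat -> 0 <= s k)
  (hs_mom : forall mu, 0 <= mu -> exists l, series_to (fun k => npow k mu * s k) l)
  cin (Hcin : exists l, series_to (fun k => INR k * cin k) l) mu (Hmu : 1 <= mu) :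
  exists K, forall c : nat -> R -> R,
    is_solution A Rs gamma s cin c ->
    forall t, 1 <= t ->
    exists l, series_to (fun k => npow k mu * Rabs (c k t - Q A Rs gamma s k)) l /\
              l <= K * exp (- kappa A Rs gamma s * t).
Proof.
  destruct Hcin as [l0 Hl0]. destruct (hs_mom mu ltac:(lra)) as [Lm HLm].
  destruct (npow_exp_rk_le_linear Rs gamma mu hR hg) as [B [HB0 HB]].
  set (q := Q A Rs gamma s). set (kap := kappa A Rs gamma s).
  set (D1 := Rabs (cin 1%nat - q 1%nat)).
  set (E2 := Rabs (cin 2%nat - q 2%nat) + A / 2 * D1 * (D1 + 2 * q 1%nat) / (rk Rs gamma 2 - kap)).
  exists (D1 + npow 2 mu * E2 + B * l0 + Lm / Rs). intros c hsol t ht.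
  set (X := exp (- kap * t)).
  set (f := fun k => npow k mu * Rabs (c k t - q k)).
  set (g := fun k => X * (B * (INR k * cin k) + / Rs * (npow k mu * s k))).
  assert (HX : X = exp (- (kap * t))) by (unfold X; f_equal; ring).
  assert (Hcin0 : forall k, (1 <= k)%nat -> 0 <= INR k * cin k)
    by (intros k hk; apply Rmult_le_pos; [apply pos_INR | apply (cin_nonneg A Rs gamma s cin c hsol k hk)]).
  assert (Hs0 : forall k, (1 <= k)%nat -> 0 <= npow k mu * s k)
    by (intros k hk; apply Rmult_le_pos; [left; apply npow_pos | apply hs_nonneg, hk]).
  assert (Hf0 : forall k, (1 <= k)%nat -> 0 <= f k)
    by (intros k hk; apply Rmult_le_pos; [left; apply npow_pos | apply Rabs_pos]).
  assert (Hg0 : forall k, (1 <= k)%nat -> 0 <= g k).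
  { intros k hk. apply Rmult_le_pos; [left; apply exp_pos|].
    pose proof (Hcin0 k hk). pose proof (Hs0 k hk). pose proof (Rinv_0_lt_compat Rs hR). nra. }
  assert (Hf1 : f 1%nat <= X * D1).
  { unfold f. rewrite npow_1, Rmult_1_l, HX. apply Rle_exp_neg_of_mul_exp.
    apply (sol_first_decay A Rs gamma s cin c); lra || assumption. }
  assert (Hf2 : f 2%nat <= X * (npow 2 mu * E2)).
  { unfold f. rewrite (Rmult_comm X), Rmult_assoc. apply Rmult_le_compat_l; [left; apply npow_pos|].
    rewrite (Rmult_comm _ X), HX. apply Rle_exp_neg_of_mul_exp.
    apply (sol_second_decay A Rs gamma s cin c); lra || assumption. }
  assert (Htail : forall k, (3 <= k)%nat -> f k <= g k).
  { intros k hk. unfold f, g. replace (/ Rs * (npow k mu * s k)) with (npow k mu * s k / Rs) by (unfold Rdiv; ring).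
    apply (tail_moment_decay A Rs gamma s cin c); try assumption. apply HB. lia. }
  assert (Hpg : forall N, psum g N <= X * (B * l0 + / Rs * Lm)).
  { intros N. unfold g. rewrite psum_scal, psum_plus, psum_scal, psum_scal.
    apply Rmult_le_compat_l; [left; apply exp_pos|]. apply Rplus_le_compat.
    - apply Rmult_le_compat_l; [lra | apply psum_le_series; assumption].
    - apply Rmult_le_compat_l; [left; apply Rinv_0_lt_compat, hR | apply psum_le_series; assumption]. }
  apply series_of_bounded_psum; [exact Hf0|]. intros N.
  pose proof (psum_le_head_tail f g N Hf0 Hg0 Htail). pose proof (Hpg N).
  unfold Rdiv. fold X. lra.
Qed.

Lemma Cmu_nonneg mu : 1 <= mu -> 0 <= Cmu mu.
Proof.
  intros Hmu. apply Rmult_le_pos; [left; apply exp_pos|].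
  apply Rle_trans with mu; [lra | apply Rmax_l].
Qed.

Lemma moment_lower_bound A Rs gamma s
  (hA : 0 < A) (hR : 0 < Rs) (hs_nonneg : forall k, (1 <= k)%nat -> 0 <= s k)
  (hs1 : A * s 1%nat >= 4 * Rs ^ 2) mu beta (hmu : 1 <= mu)
  c (hc : forall k, (1 <= k)%nat -> 0 <= c k)
  l (hl : series_to (fun k => npow k (mu + beta) * (c k + Q A Rs gamma s k)) l) :
  2 * A * (Cmu mu + 2) * l - Rs >= (3 * (Cmu mu + 2) - 1) * Rs /\
  (3 * (Cmu mu + 2) - 1) * Rs > 0.
Proof.
  pose proof (Cmu_nonneg mu hmu).
  assert (Hl1 : psum (fun k => npow k (mu + beta) * (c k + Q A Rs gamma s k)) 1 <= l).
  { apply psum_le_series; [|exact hl]. intros k hk. apply Rmult_le_pos; [left; apply npow_pos|].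
    pose proof (hc k hk). pose proof (Q_nonneg A Rs gamma s hA hR hs_nonneg k hk). lra. }
  simpl in Hl1. rewrite npow_1 in Hl1.
  pose proof (Q1_lower_bound A Rs gamma s hA hR hs_nonneg hs1).
  pose proof (hc 1%nat (le_n 1)).
  assert (3 * Rs <= 2 * A * l) by nra.
  split; nra.
Qed.

Theorem mainTheorem16 (A Rs gamma : R) (s : nat -> R)
  (hA : 0 < A) (hR : 0 < Rs) (hg : 0 < gamma)
  (hs_nonneg : forall k, (1 <= k)%nat -> 0 <= s k)
  (hs_mom : forall mu, 0 <= mu -> exists l, series_to (fun k => npow k mu * s k) l) :
  ((forall k, (1 <= k)%nat -> 0 <= Q A Rs gamma s k) /\
   (forall k, (1 <= k)%nat -> rhs A Rs gamma s (Q A Rs gamma s) k = 0) /\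
   (forall q : nat -> R,
      (forall k, (1 <= k)%nat -> 0 <= q k) ->
      (forall k, (1 <= k)%nat -> rhs A Rs gamma s q k = 0) ->
      forall k, (1 <= k)%nat -> q k = Q A Rs gamma s k))
  /\
  (forall cin : nat -> R,
     (forall k, (1 <= k)%nat -> 0 <= cin k) ->
     (exists l, series_to (fun k => INR k * cin k) l) ->
     forall mu, 1 <= mu ->
     exists K, forall c : nat -> R -> R,
       is_solution A Rs gamma s cin c ->
       forall t, 1 <= t ->
       exists l, series_to (fun k => npow k mu * Rabs (c k t - Q A Rs gamma s k)) l /\
                 l <= K * exp (- kappa A Rs gamma s * t))
  /\
  (A * s 1%nat >= 4 * Rs ^ 2 ->
   forall mu beta, 1 <= mu -> 0 <= beta <= 1 ->
   forall c : nat -> R, (forall k, (1 <= k)%nat -> 0 <= c k) ->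
   forall l, series_to (fun k => npow k (mu + beta) * (c k + Q A Rs gamma s k)) l ->
   2 * A * (Cmu mu + 2) * l - Rs >= (3 * (Cmu mu + 2) - 1) * Rs /\
   (3 * (Cmu mu + 2) - 1) * Rs > 0).
Proof.
  split; [|split].
  - split; [|split].
    + exact (Q_nonneg A Rs gamma s hA hR hs_nonneg).
    + exact (rhs_Q A Rs gamma s hA hR hs_nonneg).
    + exact (equilibrium_unique A Rs gamma s hA hR hs_nonneg).
  (* Nonnegativity of [cin] already follows from [is_solution]. *)
  - intros cin _ Hcin mu Hmu. exact (moment_convergence A Rs gamma s hA hR hg hs_nonneg hs_mom cin Hcin mu Hmu).
  - intros hs1 mu beta Hmu _ c hc l hl. exact (moment_lower_bound A Rs gamma s hA hR hs_nonneg hs1 mu beta Hmu c hc l hl).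
Qed.
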